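(* Let $m,n\in\mathbb{N}$, $A\in\mathcal{A}(\bm{p})^{m\times n}$ and $b\in\mathcal{A}(\bm{p})^{m\times1}$. The following are equivalent: (1) there exists $x\in\mathcal{A}(\bm{p})^{n\times1}$ with $A\ast x=b$; (2) there exists $\delta>0$ such that for all $k\in\mathbb{N}_0$ and all $y\in\mathbb{C}^{m\times1}$, $\|(\widehat A(k))^*y\|_2\ge\delta\,|\langle y,\widehat b(k)\rangle_2|$.
   Context: Fix $\bm{p}:\mathbb{N}_0\to(0,\infty)$ with $\lim_{n\to\infty}\bm{p}(n)^{1/n}=\infty$. For an entire function $f$ write $f(z)=\sum_{n\ge0}\widehat f(n)z^n$. $\mathcal{A}(\bm{p})$ is the set of entire functions $f$ with $\sup_{n\ge 0}\bm{p}(n)|\widehat f(n)|<\infty$, with pointwise addition and scalar multiplication and the weighted Hadamard product $(f\ast g)(z)=\sum_{n\ge0}\bm{p}(n)\widehat f(n)\widehat g(n)z^n$. Matrix products of matrices over $\mathcal{A}(\bm{p})$ use $\ast$ for entrywise multiplication. For a matrix $A=[a_{ij}]$ with entries in $\mathcal{A}(\bm{p})$ and $k\in\mathbb{N}_0$, $\widehat A(k)$ is the complex matrix $[\widehat{a_{ij}}(k)]$. $\langle\cdot,\cdot\rangle_2$ is the Euclidean inner product on $\mathbb{C}^{m\times 1}$, $\|\cdot\|_2$ the Euclidean norm, and $M^*$ the conjugate transpose of a complex matrix $M$. *)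

From HB Require Import structures.
From mathcomp Require Import all_boot all_order all_algebra.
From mathcomp Require Import all_classical all_reals all_analysis.
From mathcomp Require Import complex.
Set Implicit Arguments. Unset Strict Implicit. Unset Printing Implicit Defensive.
Import Order.TTheory GRing.Theory Num.Theory.
Local Open Scope ring_scope.
Local Open Scope complex_scope.

Definition cabs (R : realType) (z : R[i]) : R := ComplexField.Normc.normc z.

(* An element f of A(p) is represented by its Taylor coefficient sequence
   n |-> \hat f(n); membership = weighted boundedness of the coefficients.
   (This condition together with p(n)^(1/n) -> oo forces the power series
   to be entire.) *)
Definition inA (R : realType) (p : nat -> R) (f : nat -> R[i]) : Prop :=
  exists M : R, forall k : nat, p k * cabs (f k) <= M.

Definition wprod (R : realType) (p : nat -> R) (f g : nat -> R[i]) : nat -> R[i] :=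
  fun k => (p k)%:C *  f k * g k.

(* matrix product over A(p), with [*] as entrywise multiplication *)
Definition wmulmx (R : realType) (p : nat -> R) (m n l : nat)
  (A : 'M[nat -> R[i]]_(m, n)) (B : 'M[nat -> R[i]]_(n, l)) : 'M[nat -> R[i]]_(m, l) :=
  \matrix_(i < m, j < l) (fun k => \sum_(r < n) wprod p (A i r) (B r j) k).

Definition hatmx (R : realType) (m n : nat) (A : 'M[nat -> R[i]]_(m, n)) (k : nat)
  : 'M[R[i]]_(m, n) := \matrix_(i < m, j < n) A i j k.

Definition adjmx (R : realType) (m n : nat) (M : 'M[R[i]]_(m, n)) : 'M[R[i]]_(n, m) :=
  map_mx (@conjc R) M^T.

Definition inner2 (R : realType) (m : nat) (y b : 'cV[R[i]]_m) : R[i] :=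
  \sum_(i < m) y i 0 * (b i 0)^*.

Definition norm2 (R : realType) (m : nat) (y : 'cV[R[i]]_m) : R :=
  Num.sqrt (\sum_(i < m) cabs (y i 0) ^+ 2).

From HB Require Import structures.
From mathcomp Require Import all_boot all_order all_algebra.
From mathcomp Require Import all_classical all_reals all_analysis.
From mathcomp Require Import complex.
From mathcomp Require Import lra.
Import Order.TTheory GRing.Theory Num.Theory.
Local Open Scope classical_set_scope.
Local Open Scope ring_scope.
Local Open Scope complex_scope.
Set Implicit Arguments. Unset Strict Implicit.

(* Both sides of the equivalence can be read coefficientwise:
   since b-hat(k) = A-hat(k) (p(k) x-hat(k)), the equation A * x = b amounts
   to a family of complex linear systems A-hat(k) z_k = b-hat(k), and x lies
   in A(p) exactly when the solutions z_k = p(k) x-hat(k) are bounded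
   uniformly in k.  The theorem thus reduces to a quantitative Fredholm
   alternative for a single complex matrix M and vector c:
   - if c = M z then |<y, c>| = |<M^H y, z>| <= (sum_r |z_r|) ||M^H y||;
   - conversely, if delta |<y, c>| <= ||M^H y|| for all y, then c lies in the
     range of the Gram matrix M M^H (whose kernel is the kernel of M^H), and
     the minimal-norm solution z = M^H w of M z = c has ||z|| <= 1/delta. *)

Section ComplexLinearAlgebra.
Variable R : realType.
Implicit Types z : R[i].

Lemma cabs_ge0 z : 0 <= cabs z.
Proof. by case: z => a b; rewrite /cabs /= sqrtr_ge0. Qed.

Lemma cabs_conj z : cabs z^* = cabs z.
Proof. by case: z => a b; rewrite /cabs /= sqrrN. Qed.

Lemma cabs_real (r : R) : cabs r%:C = `|r|.
Proof. by rewrite /cabs /= expr0n /= addr0 sqrtr_sqr. Qed.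

Lemma cabs_sqr z : ((cabs z) ^+ 2)%:C = z^* * z.
Proof.
case: z => a b; rewrite /cabs /= sqr_sqrtr ?addr_ge0 ?sqr_ge0 //.
simpc; apply/eqP; rewrite eq_complex /=; apply/andP; split; apply/eqP.
  by rewrite !expr2.
by rewrite mulrC subrr.
Qed.

Lemma cabsM z1 z2 : cabs (z1 * z2) = cabs z1 * cabs z2.
Proof. exact: ComplexField.Normc.normcM. Qed.

Lemma cabs_eq0 z : cabs z = 0 -> z = 0.
Proof. exact: ComplexField.Normc.eq0_normc. Qed.

Lemma cabsV z : cabs z^-1 = (cabs z)^-1.
Proof. exact: ComplexField.Normc.normcV. Qed.

Lemma cabs_sum (I : Type) (r : seq I) (P : pred I) (F : I -> R[i]) :
  cabs (\sum_(i <- r | P i) F i) <= \sum_(i <- r | P i) cabs (F i).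
Proof.
apply: (big_ind2 (fun a b => cabs a <= b)) => //.
  by rewrite /cabs ComplexField.Normc.normc0.
by move=> a1 a2 b1 b2 h1 h2; apply: le_trans (le_normcD _ _) (lerD h1 h2).
Qed.

Lemma norm2_ge0 m (y : 'cV[R[i]]_m) : 0 <= norm2 y.
Proof. exact: sqrtr_ge0. Qed.

Lemma entry_le_norm2 m (y : 'cV[R[i]]_m) i : cabs (y i 0) <= norm2 y.
Proof.
rewrite -(ger0_norm (cabs_ge0 (y i 0))) -sqrtr_sqr /norm2.
rewrite ler_sqrt ?sumr_ge0 // => [|j _]; last by rewrite sqr_ge0.
by rewrite (bigD1 i) //= lerDl sumr_ge0 // => j _; rewrite sqr_ge0.
Qed.

Lemma adjmxE m n (M : 'M[R[i]]_(m, n)) i j : adjmx M i j = (M j i)^*.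
Proof. by rewrite /adjmx !mxE. Qed.

Lemma adjmxM m n l (A : 'M[R[i]]_(m, n)) (B : 'M[R[i]]_(n, l)) :
  adjmx (A *m B) = adjmx B *m adjmx A.
Proof. by rewrite /adjmx trmx_mul map_mxM. Qed.

Lemma adjmxK m n (A : 'M[R[i]]_(m, n)) : adjmx (adjmx A) = A.
Proof. by apply/matrixP => i j; rewrite !adjmxE conjcK. Qed.

Lemma inner2E m (y b : 'cV[R[i]]_m) : inner2 y b = (adjmx b *m y) 0 0.
Proof. by rewrite /inner2 mxE; apply: eq_bigr => i _; rewrite adjmxE mulrC. Qed.

Lemma inner2_adj m n (M : 'M[R[i]]_(m, n)) (y : 'cV[R[i]]_m) (z : 'cV[R[i]]_n) :
  inner2 y (M *m z) = inner2 (adjmx M *m y) z.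
Proof. by rewrite !inner2E adjmxM mulmxA. Qed.

Lemma inner2_self m (u : 'cV[R[i]]_m) : inner2 u u = (norm2 u ^+ 2)%:C.
Proof.
rewrite /norm2 sqr_sqrtr ?sumr_ge0 // => [|i _]; last exact: sqr_ge0.
by rewrite rmorph_sum; apply: eq_bigr => i _; rewrite mulrC -cabs_sqr.
Qed.

Lemma cabs_inner2_le m (u z : 'cV[R[i]]_m) :
  cabs (inner2 u z) <= (\sum_(r < m) cabs (z r 0)) * norm2 u.
Proof.
rewrite /inner2; apply: le_trans (cabs_sum _ _ _) _; rewrite mulr_suml; apply: ler_sum => r _.
rewrite cabsM cabs_conj mulrC.
by apply: ler_wpM2l; [exact: cabs_ge0 | exact: entry_le_norm2].
Qed.

Lemma inner2_range_le m n (M : 'M[R[i]]_(m, n)) (z : 'cV[R[i]]_n)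
    (y : 'cV[R[i]]_m) :
  cabs (inner2 y (M *m z)) <= (\sum_(r < n) cabs (z r 0)) * norm2 (adjmx M *m y).
Proof. by rewrite inner2_adj cabs_inner2_le. Qed.

(* The Gram matrix M M^H has the same kernel as M^H, measured by the norm:
   ||M^H y||^2 = <y, M M^H y>. *)
Lemma gram_kernel m n (M : 'M[R[i]]_(m, n)) (y : 'cV[R[i]]_m) :
  M *m adjmx M *m y = 0 -> norm2 (adjmx M *m y) = 0.
Proof.
move=> Gy; have := inner2_self (adjmx M *m y).
rewrite -inner2_adj mulmxA Gy inner2E /adjmx trmx0 map_mx0 mul0mx mxE => /esym/eqP.
by rewrite fmorph_eq0 expf_eq0 /= => /eqP.
Qed.

(* Fredholm alternative for the Hermitian matrix G = M M^H: a vector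
   orthogonal to the kernel of G lies in the range of G.  The kernel is
   reached through the cokernel of G^T, conjugated. *)
Lemma gram_range m n (M : 'M[R[i]]_(m, n)) (c : 'cV[R[i]]_m) :
  (forall y, M *m adjmx M *m y = 0 -> inner2 y c = 0) ->
  exists w : 'cV[R[i]]_m, M *m adjmx M *m w = c.
Proof.
move=> orth; set G := M *m adjmx M; set C := cokermx G^T.
have G_herm : adjmx G = G by rewrite /G adjmxM adjmxK.
have GconjC : G *m map_mx conjc C = 0.
  have := congr1 (map_mx conjc) (mulmx_coker G^T).
  by rewrite map_mxM map_mx0 -[map_mx _ G^T]/(adjmx G) G_herm.
have cC : c^T *m C = 0.
  apply/matrixP => a j; rewrite (ord1 a) !mxE.
  pose y : 'cV[R[i]]_m := \matrix_(i < m, _ < 1) (C i j)^*.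
  have Gy : G *m y = 0.
    apply/matrixP => a' b'; rewrite [RHS]mxE.
    transitivity ((G *m map_mx conjc C) a' j); last by rewrite GconjC mxE.
    by rewrite !mxE; apply: eq_bigr => i _; rewrite !mxE.
  have orth_y := orth y Gy.
  have yE i : y i 0 = (C i j)^* by rewrite mxE.
  transitivity (conjc (inner2 y c)); last by rewrite orth_y ?conjc0.
  rewrite /inner2 rmorph_sum; apply: eq_bigr => i _.
  by rewrite yE rmorphM /= !conjcK [c^T _ _]mxE mulrC.
have /submxP [w' cw] : (c^T <= G^T)%MS by rewrite submxE cC.
by exists w'^T; rewrite -[c]trmxK cw trmx_mul trmxK.
Qed.

(* Sufficiency half of the alternative: the dual inequality with constant
   delta yields a solution of M z = c with all coordinates <= 1/delta,
   namely the minimal-norm solution z = M^H w. *)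
Lemma bounded_solution m n (M : 'M[R[i]]_(m, n)) (c : 'cV[R[i]]_m) (d : R) :
  0 < d -> (forall y, d * cabs (inner2 y c) <= norm2 (adjmx M *m y)) ->
  exists z : 'cV[R[i]]_n, M *m z = c /\ forall j, cabs (z j 0) <= d^-1.
Proof.
move=> d_gt0 dual.
have [w Gw] : exists w, M *m adjmx M *m w = c.
  apply: gram_range => y /gram_kernel ker_y; apply: cabs_eq0.
  apply/le_anti; rewrite cabs_ge0 andbT.
  by have := dual y; rewrite ker_y pmulr_rle0.
set z := adjmx M *m w.
have norm_z : d * norm2 z ^+ 2 <= norm2 z.
  have := dual w; rewrite -Gw -mulmxA inner2_adj -/z inner2_self.
  by rewrite cabs_real ger0_norm // sqr_ge0.
have z_le : norm2 z <= d^-1.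
  have z_ge0 := norm2_ge0 z.
  rewrite -(ler_pM2l d_gt0) mulfV ?gt_eqF //.
  have [->|z_neq0] := eqVneq (norm2 z) 0; first by rewrite mulr0.
  have z_gt0 : 0 < norm2 z by rewrite lt_def z_neq0 z_ge0.
  by rewrite -(ler_pM2r z_gt0) mul1r -mulrA -expr2.
exists z; split; first by rewrite mulmxA.
by move=> j; apply: le_trans (entry_le_norm2 _ _) z_le.
Qed.

End ComplexLinearAlgebra.

Lemma hatmx_wmulmx (R : realType) (p : nat -> R) m n l
    (A : 'M[nat -> R[i]]_(m, n)) (x : 'M[nat -> R[i]]_(n, l)) (k : nat) :
  hatmx (wmulmx p A x) k = hatmx A k *m ((p k)%:C *: hatmx x k).
Proof.
apply/matrixP => i j; rewrite !mxE; apply: eq_bigr => r _.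
by rewrite /wprod !mxE mulrCA mulrA.
Qed.

Lemma hatmx_inj (R : realType) m n (X Y : 'M[nat -> R[i]]_(m, n)) :
  (forall k, hatmx X k = hatmx Y k) -> X = Y.
Proof.
move=> XY; apply/matrixP => i j; apply: boolp.funext => k.
by have /matrixP/(_ i j) := XY k; rewrite !mxE.
Qed.

Theorem mainTheorem12 (R : realType) (p : nat -> R)
  (p_pos : forall k, 0 < p k)
  (p_growth : (fun k : nat => p k `^ (k%:R)^-1) @ \oo --> +oo%R)
  (m n : nat) (m_pos : (0 < m)%N) (n_pos : (0 < n)%N)
  (A : 'M[nat -> R[i]]_(m, n)) (b : 'M[nat -> R[i]]_(m, 1))
  (hA : forall i j, inA p (A i j)) (hb : forall i j, inA p (b i j)) :
  (exists x : 'M[nat -> R[i]]_(n, 1),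
      (forall i j, inA p (x i j)) /\ wmulmx p A x = b)
  <->
  (exists delta : R, 0 < delta /\
     forall (k : nat) (y : 'cV[R[i]]_m),
       delta * cabs (inner2 y (hatmx b k)) <= norm2 (adjmx (hatmx A k) *m y)).
Proof.
split.
- case=> x [x_inA Ax_b]; have [bound x_le] := boolp.choice (fun j => x_inA j 0).
  set S := \sum_j bound j.
  have S_ge0 : 0 <= S.
    rewrite sumr_ge0 // => j _.
    exact: le_trans (mulr_ge0 (ltW (p_pos 0%N)) (cabs_ge0 _)) (x_le j 0%N).
  exists (1 + S)^-1; split => [|k y]; first by rewrite invr_gt0; lra.
  rewrite ler_pdivrMl; last lra.
  rewrite -Ax_b hatmx_wmulmx; apply: le_trans (inner2_range_le _ _ _) _.
  apply: ler_wpM2r; first exact: norm2_ge0.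
  apply: (@le_trans _ _ S); last lra.
  by apply: ler_sum => r _; rewrite !mxE cabsM cabs_real gtr0_norm //; apply: x_le.
- case=> d [d_gt0 dual].
  have [z z_sol] := boolp.choice (fun k => bounded_solution d_gt0 (dual k)).
  pose x := \matrix_(j < n, l < 1) fun k => z k j l / (p k)%:C.
  have px k : (p k)%:C *: hatmx x k = z k.
    apply/matrixP => j l; rewrite !mxE mulrC -mulrA mulVf ?mulr1 //.
    by rewrite fmorph_eq0 gt_eqF.
  exists x; split.
  + move=> j l; exists d^-1 => k; rewrite mxE cabsM cabsV cabs_real gtr0_norm //.
    by rewrite mulrCA divff ?gt_eqF // mulr1 (ord1 l); case: (z_sol k).
  + by apply: hatmx_inj => k; rewrite hatmx_wmulmx px; case: (z_sol k).
Qed.
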